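(* Let $P$ be a finite near-simplicial poset of rank $d$ with $f$-vector $(f_{-1},f_0,\dots,f_d)$. Then $$\mathcal{M}_P(z)=g^P_d(z)+\sum_{r=-1}^{d-1}(1-z)^{r+1}f_r.$$
   Context: A ranked poset is a poset with a rank function $|\cdot|$ such that covering relations increase rank by one and minimal elements have rank $-1$; $f_r$ is the number of elements of rank $r$; $P_{\le i}=\{p:|p|\le i\}$. A simplicial poset is a ranked poset in which every closed interval $[p,q]$ ($p\le q$) is isomorphic to a Boolean lattice (the subsets of $\{1,\dots,n\}$ under inclusion) for some $n$. A near-simplicial poset of rank $d$ is a ranked poset $P$ such that $P_{\le d-1}$ is a disjoint union (elements of different components incomparable) of simplicial posets each having a unique minimum element. The Möbius function $\mu$ is $\mu[p,p]=1$, $\mu[p,q]=-\sum_{p\le s<q}\mu[p,s]$ for $p<q$, $0$ if $p\not\le q$; $\mu_z[p,q]=\mu[p,q]z^{|q|-|p|}$; $\mathcal{M}_P(z)=\sum_{p\le q\in P}\mu_z[p,q]$; $g^P_d(z)=\sum_{p\le q,\ |p|\le d\le |q|}\mu_z[p,q]$. *)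

From HB Require Import structures.
From mathcomp Require Import all_boot all_order all_algebra.
Set Implicit Arguments. Unset Strict Implicit. Unset Printing Implicit Defensive.
Import Order.TTheory GRing.Theory Num.Theory.
Local Open Scope ring_scope.

Section PosetDefs.
Variables (P : finType) (le : rel P).

Definition is_partial_order : Prop :=
  [/\ reflexive le, antisymmetric le & transitive le].

Definition ltp (p q : P) : bool := (p != q) && le p q.

Definition covers (p q : P) : bool :=
  ltp p q && ~~ [exists s, ltp p s && ltp s q].

Definition minimal (p : P) : Prop := forall s, le s p -> s = p.

Definition is_rank_function (rk : P -> int) : Prop :=
  (forall p q, covers p q -> rk q = rk p + 1) /\
  (forall p, minimal p -> rk p = -1).

(* the subposet B (with the induced order) has closed interval [p,q] isomorphic
   to a Boolean lattice (subsets of {0..n-1} under inclusion) *)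
Definition interval_in (B : {set P}) (p q : P) : {set P} :=
  [set s in B | le p s && le s q].

Definition boolean_interval (B : {set P}) (p q : P) : Prop :=
  exists (n : nat) (f : {set 'I_n} -> P),
    [/\ (forall A, f A \in interval_in B p q),
        (forall s, s \in interval_in B p q -> exists A, f A = s) &
        (forall A1 A2, le (f A1) (f A2) = (A1 \subset A2))].

Definition simplicial_on (B : {set P}) : Prop :=
  forall p q, p \in B -> q \in B -> le p q -> boolean_interval B p q.

Definition has_unique_minimum_on (B : {set P}) : Prop :=
  exists2 m, m \in B & forall s, s \in B -> le m s.

Definition near_simplicial (rk : P -> int) (d : int) : Prop :=
  [/\ is_partial_order, is_rank_function rk,
      (forall p, rk p <= d), (exists p, rk p = d) &
      exists Pi : {set {set P}},
        [/\ partition Pi [set p | rk p <= d - 1],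
            (forall B C, B \in Pi -> C \in Pi -> B != C ->
               forall x y, x \in B -> y \in C -> ~~ le x y) &
            (forall B, B \in Pi -> simplicial_on B /\ has_unique_minimum_on B)]].

(* Moebius function, by recursion with fuel #|P| (enough: chains have < #|P| steps) *)
Fixpoint mobius_fuel (k : nat) (p q : P) : int :=
  if p == q then 1 else
  if le p q then
    match k with
    | 0 => 0
    | k'.+1 => - \sum_(s | le p s && ltp s q) mobius_fuel k' p s
    end
  else 0.

Definition mobius (p q : P) : int := mobius_fuel #|P| p q.

Definition mobius_z (rk : P -> int) (p q : P) : {poly int} :=
  (mobius p q)%:P * 'X^(absz (rk q - rk p)).

Definition M_poly (rk : P -> int) : {poly int} :=
  \sum_(p : P) \sum_(q : P | le p q) mobius_z rk p q.

Definition g_poly (rk : P -> int) (d : int) : {poly int} :=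
  \sum_(p : P) \sum_(q : P | [&& le p q, rk p <= d & d <= rk q]) mobius_z rk p q.

Definition fvec (rk : P -> int) (r : int) : nat := #|[set p | rk p == r]|.

End PosetDefs.

From HB Require Import structures.
From mathcomp Require Import all_boot all_order all_algebra zify.
Set Implicit Arguments. Unset Strict Implicit. Unset Printing Implicit Defensive.
Import Order.TTheory GRing.Theory Num.Theory.
Local Open Scope ring_scope.

(* Split each column sum  sum_(p <= q) mu_z[p,q]  of M_P according to whether
   |q| >= d (these terms, together with |p| <= d which always holds, make up
   g_d) or |q| < d.  In the latter case q lies in a simplicial block, which is
   closed downwards because distinct blocks are incomparable, so the interval
   below q is a Boolean lattice on n = |q| + 1 atoms.  There
   mu[p,q] = (-1)^(|q|-|p|), so the column sum is
   sum_J (-z)^(n - |J|) = (1 - z)^n; grouping these columns by rank gives the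
   f-vector term. *)

Lemma sum_exprs_card_setC (T : finType) (R : comNzRingType) (c : R) :
  \sum_(J : {set T}) c ^+ #|~: J| = (1 + c) ^+ #|T|.
Proof.
rewrite -[RHS]prodr_const (bigA_distr 1 +%R (fun=> 1) (fun=> c)).
apply: eq_bigr => J _; rewrite (bigID (mem J)) /= big1 ?mul1r => [|i ->//].
rewrite -prodr_const; apply: eq_big => i; rewrite ?inE //.
by move=> /negbTE ->.
Qed.

Lemma sum_sign_interval_eq0 (T : finType) (A C : {set T}) : A \proper C ->
  \sum_(D : {set T} | (A \subset D) && (D \subset C)) (-1) ^+ #|D :\: A| = 0 :> int.
Proof.
case/properP=> sAC [x xC xA].
pose t (D : {set T}) := if x \in D then D :\ x else x |: D.
have tK : involutive t.
  by move=> D; rewrite /t; case: (boolP (x \in D)) => xD;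
    rewrite ?setD11 ?setD1K ?setU11 ?setU1K.
set S := (X in X = 0).
suff : S = - S by lia.
rewrite {1}/S (reindex_inj (inv_inj tK)) -sumrN; apply: eq_big => D.
  rewrite /t; case: ifP => xD.
    rewrite subsetD1 (negbTE xA) andbT; congr andb.
    by rewrite -{2}(setD1K xD) subUset sub1set xC.
  by rewrite subUset sub1set xC -subDset (setDidPl _) // disjoint_sym disjoints1.
move=> _; rewrite /t; case: ifP => xD.
  by rewrite (cardsD1 x (D :\: A)) !inE xD xA !setDDl setUC exprS mulN1r opprK.
by rewrite setDUl (setDidPl _) ?disjoints1 // cardsU1 !inE xA xD exprS mulN1r.
Qed.

Lemma reindex_inj_onto (T U : finType) (R : nmodType) (f : U -> T) (Q : pred T)
    (F : T -> R) :
  injective f -> (forall s, Q s -> exists A, f A = s) ->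
  \sum_(s | Q s) F s = \sum_(A | Q (f A)) F (f A).
Proof.
move=> f_inj f_onto.
rewrite (reindex_omap f (fun s => [pick A | f A == s])) => [|s /f_onto [A <-]].
  apply: eq_bigl => A; case: pickP => [B /eqP eqBA | /(_ A)]; last by rewrite eqxx.
  by rewrite (f_inj _ _ eqBA) eqxx andbT.
by case: pickP => [B /= /eqP -> | /(_ A)]; rewrite ?eqxx.
Qed.

Section RankedPoset.
Variables (P : finType) (le : rel P) (rk : P -> int).
Hypotheses (refl_le : reflexive le) (anti_le : antisymmetric le)
  (trans_le : transitive le).
Hypotheses (rk_covers : forall p q, covers le p q -> rk q = rk p + 1)
  (rk_minimal : forall p, minimal le p -> rk p = -1).

Lemma le_rk p q : le p q -> rk p <= rk q.
Proof.
move: {2}#|_| (leqnn #|[set s | le p s && le s q]|) => k.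
elim: k p q => [|k IHk] p q card_pq le_pq.
  suff : p \in set0 by rewrite inE.
  by move: card_pq; rewrite leqn0 cards_eq0 => /eqP <-; rewrite inE refl_le.
have [-> // | neq_pq] := eqVneq p q.
have [cov_pq | not_cov] := boolP (covers le p q).
  by rewrite (rk_covers cov_pq) lerDl.
move: not_cov; rewrite /covers /ltp neq_pq le_pq negbK.
case/existsP=> s /andP [/andP [neq_ps le_ps] /andP [neq_sq le_sq]].
have lt_ps : (#|[set t | le p t && le t s]| < #|[set t | le p t && le t q]|)%N.
  apply/proper_card/properP; split.
    by apply/subsetP=> t; rewrite !inE => /andP [-> /trans_le ->].
  exists q; rewrite !inE le_pq ?refl_le //=; apply: contra neq_sq => le_qs.
  by rewrite (anti_le (introT andP (conj le_sq le_qs))).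
have lt_sq : (#|[set t | le s t && le t q]| < #|[set t | le p t && le t q]|)%N.
  apply/proper_card/properP; split.
    by apply/subsetP=> t; rewrite !inE => /andP [/(trans_le le_ps) -> ->].
  exists p; rewrite !inE le_pq ?refl_le //= andbT; apply: contra neq_ps => le_sp.
  by rewrite (anti_le (introT andP (conj le_ps le_sp))).
rewrite (le_trans (IHk _ _ _ le_ps)) ?(IHk _ _ _ le_sq) // -ltnS.
  exact: leq_trans lt_ps card_pq.
exact: leq_trans lt_sq card_pq.
Qed.

Section BooleanDownSet.
Variables (n : nat) (f : {set 'I_n} -> P) (q : P).
Hypotheses (le_f : forall A B, le (f A) (f B) = (A \subset B))
  (f_onto : forall s, le s q -> exists A, f A = s) (f_setT : f setT = q).

Lemma boolean_inj : injective f.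
Proof. by move=> A B eqAB; apply/eqP; rewrite eqEsubset -!le_f eqAB refl_le. Qed.

Lemma boolean_le_top A : le (f A) q.
Proof. by rewrite -f_setT le_f subsetT. Qed.

Lemma boolean_minimal_set0 : minimal le (f set0).
Proof.
move=> s le_s0; have [A eqAs] := f_onto (trans_le le_s0 (boolean_le_top set0)).
by move: le_s0; rewrite -eqAs le_f subset0 => /eqP ->.
Qed.

Lemma boolean_rk A : rk (f A) = #|A|%:Z - 1.
Proof.
move: {2}#|A| (erefl #|A|) => k; elim: k A => [|k IHk] A card_A.
  move/eqP: card_A; rewrite cards_eq0 => /eqP ->.
  by rewrite (rk_minimal boolean_minimal_set0) cards0.
have /card_gt0P [x xA] : (0 < #|A|)%N by rewrite card_A.
have card_Ax : #|A :\ x| = k by move: card_A; rewrite (cardsD1 x A) xA => -[].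
suff /rk_covers -> : covers le (f (A :\ x)) (f A) by rewrite IHk card_Ax; lia.
rewrite /covers /ltp le_f subD1set (inj_eq boolean_inj) andbT; apply/andP; split.
  by apply: contraTneq xA => <-; rewrite setD11.
apply/existsP=> -[s /andP [/andP [neq1 le1] /andP [neq2 le2]]].
have [C eqCs] := f_onto (trans_le le2 (boolean_le_top A)).
move: neq1 le1 neq2 le2; rewrite -eqCs !le_f !(inj_eq boolean_inj).
move=> neq1 le1 neq2 le2.
have ltAx : A :\ x \proper C by rewrite properEneq neq1 le1.
have ltA : C \proper A by rewrite properEneq neq2 le2.
by have := proper_card ltAx; have := proper_card ltA; rewrite card_A card_Ax; lia.
Qed.

Lemma boolean_mobius_fuel k (A C : {set 'I_n}) :
  A \subset C -> (#|C :\: A| <= k)%N ->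
  mobius_fuel le k (f A) (f C) = (-1) ^+ #|C :\: A|.
Proof.
elim: k A C => [|k IHk] A C sAC card_CA /=.
  suff -> : A = C by rewrite eqxx setDv cards0.
  by apply/eqP; rewrite eqEsubset sAC -setD_eq0 -cards_eq0 -leqn0.
have [-> | neq_AC] := eqVneq A C; first by rewrite eqxx setDv cards0.
rewrite (inj_eq boolean_inj) (negbTE neq_AC) le_f sAC.
rewrite (reindex_inj_onto _ boolean_inj) => [|s /andP [_ /andP [_ le_sC]]]; last first.
  exact/f_onto/(trans_le le_sC)/boolean_le_top.
have ltAC : A \proper C by rewrite properEneq neq_AC.
move/eqP: (sum_sign_interval_eq0 ltAC).
rewrite (bigD1 C) ?sAC ?subxx //= addr_eq0 => /eqP ->.
congr (- _); apply: eq_big => [D | D].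
  by rewrite /ltp !le_f (inj_eq boolean_inj) andbA andbAC.
rewrite /ltp !le_f (inj_eq boolean_inj) => /and3P [sAD neq_DC sDC]; apply: IHk => //.
have := proper_card (_ : D \proper C); rewrite properEneq neq_DC sDC => /(_ isT).
move: card_CA; rewrite !cardsD (setIidPr sAD) (setIidPr sAC).
by have := subset_leq_card sAD; lia.
Qed.

Lemma boolean_mobius (A C : {set 'I_n}) :
  A \subset C -> mobius le (f A) (f C) = (-1) ^+ #|C :\: A|.
Proof.
move=> sAC; apply: boolean_mobius_fuel => //.
(* The fuel #|P| suffices: the singletons alone give n <= #|P|. *)
have f1_inj : injective (fun i : 'I_n => f [set i]).
  by move=> i j /boolean_inj /set1_inj.
by rewrite (leq_trans (max_card _)) //; have := leq_card _ f1_inj; rewrite card_ord.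
Qed.

Lemma boolean_rk_top : rk q = n%:Z - 1.
Proof. by rewrite -f_setT boolean_rk cardsT card_ord. Qed.

Lemma boolean_sum_mobius_z : \sum_(p | le p q) mobius_z le rk p q = (1 - 'X) ^+ n.
Proof.
rewrite (reindex_inj_onto _ boolean_inj f_onto).
rewrite -[in RHS](card_ord n) -sum_exprs_card_setC.
apply: eq_big => [A | A _]; first by rewrite boolean_le_top.
rewrite /mobius_z -f_setT boolean_mobius ?subsetT // !boolean_rk setTD cardsT card_ord.
have -> : absz (n%:Z - 1 - (#|A|%:Z - 1))%R = #|~: A|.
  by have := cardsC A; rewrite card_ord; lia.
by rewrite [RHS]exprNn polyC_exp polyCN.
Qed.

End BooleanDownSet.

End RankedPoset.

Section NearSimplicial.
Variables (P : finType) (le : rel P) (rk : P -> int) (d : int).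
Hypothesis nsP : near_simplicial le rk d.

Lemma down_set_boolean q : rk q < d ->
  exists n (f : {set 'I_n} -> P),
    [/\ forall A B, le (f A) (f B) = (A \subset B),
        forall s, le s q -> exists A, f A = s & f setT = q].
Proof.
move=> lt_qd; have [[refl_le anti_le trans_le] [rk_covers _] _ _] := nsP.
case=> Pi [/and3P [/eqP cover_Pi _ _] incomparable blocks].
have /bigcupP [B B_Pi qB] : q \in cover Pi by rewrite cover_Pi inE; lia.
have [simplicial_B [m mB min_m]] := blocks B B_Pi.
have [n [f [f_in f_onto le_f]]] := simplicial_B m q mB qB (min_m q qB).
have down_B s : le s q -> s \in B.
  move=> le_sq; have /bigcupP [C C_Pi sC] : s \in cover Pi.
    have := le_rk refl_le anti_le trans_le rk_covers le_sq.
    by rewrite cover_Pi inE; lia.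
  have [<- // | neq_CB] := eqVneq C B.
  by have := incomparable C B C_Pi B_Pi neq_CB s q sC qB; rewrite le_sq.
have f_onto_q s : le s q -> exists A, f A = s.
  by move=> le_sq; apply: f_onto; rewrite inE down_B // min_m ?down_B.
exists n, f; split => //.
have [A eqAq] := f_onto_q q (refl_le q).
by move: (f_in setT); rewrite inE -eqAq le_f subTset => /and3P [_ _ /eqP ->].
Qed.

Lemma rk_geN1 q : rk q < d -> -1 <= rk q.
Proof.
have [[refl_le _ trans_le] [rk_covers rk_minimal] _ _ _] := nsP.
case/down_set_boolean=> n [f [le_f f_onto f_setT]].
by have := boolean_rk_top refl_le trans_le rk_covers rk_minimal le_f f_onto f_setT; lia.
Qed.

Lemma sum_mobius_z_below q : rk q < d ->
  \sum_(p | le p q) mobius_z le rk p q = (1 - 'X) ^+ absz (rk q + 1).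
Proof.
have [[refl_le _ trans_le] [rk_covers rk_minimal] _ _ _] := nsP.
case/down_set_boolean=> n [f [le_f f_onto f_setT]].
rewrite (boolean_sum_mobius_z refl_le trans_le rk_covers rk_minimal le_f f_onto f_setT).
have := boolean_rk_top refl_le trans_le rk_covers rk_minimal le_f f_onto f_setT.
by move=> ->; congr (_ ^+ _); lia.
Qed.

End NearSimplicial.

Lemma M_poly_split (P : finType) (le : rel P) (rk : P -> int) (d : int) :
  (forall p, rk p <= d) ->
  M_poly le rk =
    g_poly le rk d + \sum_(q | rk q < d) \sum_(p | le p q) mobius_z le rk p q.
Proof.
move=> rk_le_d; rewrite /M_poly /g_poly.
rewrite [\sum_(q | _ < _) _](exchange_big_dep xpredT) //= -big_split.
apply: eq_bigr => p _; rewrite (bigID (fun q => d <= rk q)) /=.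
by congr (_ + _); apply: eq_bigl => q; rewrite ?rk_le_d // -ltNge andbC.
Qed.

Lemma sum_by_rank (P : finType) (rk : P -> int) (d : int) (R : nmodType)
    (F : nat -> R) :
  (forall q, rk q <= d) -> (forall q, rk q < d -> -1 <= rk q) ->
  \sum_(q | rk q < d) F (absz (rk q + 1)) =
    \sum_(i < absz (d + 1)) F i *+ fvec rk (i%:Z - 1).
Proof.
move=> rk_le_d rk_ge.
under [RHS]eq_bigr => i _ do rewrite /fvec -sumr_const.
rewrite (exchange_big_dep xpredT) //= big_mkcond /=; apply: eq_bigr => q _.
case: ifP => lt_qd.
  have ge_q := rk_ge q lt_qd.
  have lt_q_ord : (absz (rk q + 1)%R < absz (d + 1)%R)%N by lia.
  rewrite (big_pred1 (Ordinal lt_q_ord)) // => i; rewrite inE.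
  by apply/eqP/eqP => [eq_qi | -> /=]; first apply: val_inj => /=; lia.
rewrite big_pred0 // => i; rewrite inE; apply/eqP => eq_qi.
by have := ltn_ord i; have := rk_le_d q; move: lt_qd => /negbT; rewrite -leNgt; lia.
Qed.

Theorem mainTheorem14 (P : finType) (le : rel P) (rk : P -> int) (d : int) :
  near_simplicial le rk d ->
  M_poly le rk =
    g_poly le rk d +
    \sum_(i < absz (d + 1)) (1 - 'X) ^+ i * ((fvec rk (i%:Z - 1))%:R)%:P.
Proof.
move=> nsP; have [_ _ rk_le_d _ _] := nsP.
rewrite (M_poly_split le rk_le_d); congr (_ + _).
rewrite (eq_bigr _ (fun q => sum_mobius_z_below nsP (q := q))).
rewrite (sum_by_rank (fun i => (1 - 'X) ^+ i) rk_le_d (rk_geN1 nsP)).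
by apply: eq_bigr => i _; rewrite polyC_natr mulr_natr.
Qed.
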